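(* For $D\ge 1$ let $$\mathbb V(D):=\sup\Bigl\{|u(0)|^2:\ u\in H^1_{\mathrm{per}}(0,2\pi),\ \int_0^{2\pi}u(x)\,dx=0,\ \|u\|^2=1,\ \|u'\|^2=D\Bigr\}.$$ Then $$\mathbb V(D)=\frac1{2\pi}\,\frac{\Bigl(\sum_{k\in\mathbb Z_0}\frac1{\lambda+k^2}\Bigr)^2}{\sum_{k\in\mathbb Z_0}\frac1{(\lambda+k^2)^2}},$$ where $\lambda=\lambda(D)$ is the unique solution of the equation $$D(\lambda):=\frac{\sum_{k\in\mathbb Z_0}\frac{k^2}{(\lambda+k^2)^2}}{\sum_{k\in\mathbb Z_0}\frac1{(\lambda+k^2)^2}}=D .$$ Furthermore $\lambda(1)=-1$ and $\lambda(\infty)=\infty$ (i.e. $\lambda(D)\to-1$ as $D\to1$ and $\lambda(D)\to\infty$ as $D\to\infty$).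
   Context: Functions are complex-valued and $2\pi$-periodic; $\|\cdot\|$ denotes the $L_2(0,2\pi)$ norm; $\mathbb Z_0:=\mathbb Z\setminus\{0\}$; $\lambda$ ranges over $(-1,\infty)$. *)

From Stdlib Require Import Reals ZArith.
From Coquelicot Require Import Coquelicot.
Open Scope R_scope.

Definition zsum0 (f : Z -> R) : R :=
  Series (fun n : nat => f (Z.of_nat (S n)) + f (- Z.of_nat (S n))%Z).

Definition zsummable0 (f : Z -> R) : Prop :=
  ex_series (fun n : nat => Rabs (f (Z.of_nat (S n))) + Rabs (f (- Z.of_nat (S n))%Z)).

(* A 2pi-periodic function u is represented by its Fourier coefficients
   c : Z -> C, u(x) = sum_k c k e^{ikx}.  u in H^1_per(0,2pi) with zero mean
   iff c 0 = 0, sum |c_k|^2 < oo and sum k^2 |c_k|^2 < oo. *)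
Definition H1per_mean0 (c : Z -> C) : Prop :=
  c 0%Z = 0%C /\
  zsummable0 (fun k => (Cmod (c k))^2) /\
  zsummable0 (fun k => (IZR k)^2 * (Cmod (c k))^2).

(* ||u||^2 and ||u'||^2 in L_2(0,2pi) (Parseval) *)
Definition L2norm2 (c : Z -> C) : R := 2 * PI * zsum0 (fun k => (Cmod (c k))^2).
Definition L2norm2_deriv (c : Z -> C) : R :=
  2 * PI * zsum0 (fun k => (IZR k)^2 * (Cmod (c k))^2).

(* pointwise value of the (continuous representative of the) function *)
Definition fourier_eval (c : Z -> C) (x : R) : C :=
  (zsum0 (fun k => Re (c k * (cos (IZR k * x), sin (IZR k * x)))%C),
   zsum0 (fun k => Im (c k * (cos (IZR k * x), sin (IZR k * x)))%C)).

Definition VV (D : R) : Rbar :=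
  Lub_Rbar (fun v => exists c : Z -> C,
     H1per_mean0 c /\ L2norm2 c = 1 /\ L2norm2_deriv c = D /\
     v = (Cmod (fourier_eval c 0))^2).

Definition Dfun (l : R) : R :=
  zsum0 (fun k => (IZR k)^2 / (l + (IZR k)^2)^2) /
  zsum0 (fun k => 1 / (l + (IZR k)^2)^2).

Definition Vformula (l : R) : R :=
  / (2 * PI) * (zsum0 (fun k => 1 / (l + (IZR k)^2)))^2 /
  zsum0 (fun k => 1 / (l + (IZR k)^2)^2).

From Stdlib Require Import Reals ZArith Lra Psatz.
From Coquelicot Require Import Coquelicot.
Open Scope R_scope.

(* Let g_k = 1/(l + k^2), the Fourier coefficients of the Green function of -d^2/dx^2 + l.
   Completing the square in  sum_k (l + k^2) |c_k - a g_k|^2 >= 0  with the optimal a gives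
     |u(0)|^2 <= (l ||u||^2 + ||u'||^2) / (2 pi) * sum_{k in Z_0} g_k,
   with equality when u is a multiple of the Green function.  For l with D(l) = D this
   multiple has ||u||^2 = 1 and ||u'||^2 = D, which gives V(D).
   The same inequality for the Green function of l2 with the weight of l1 <> l2 is strict, and
   the two strict inequalities for (l1, l2) and (l2, l1) combine to
   (l2 - l1) (D(l2) - D(l1)) > 0.  So D is strictly increasing; it is continuous, tends to 1 as
   l -> -1 and D(k^2) >= k/5, which gives existence and uniqueness of l(D) and its limits.
   For D = 1 the maximiser is cos x / sqrt pi, and V(1) = 1/pi is the limit of the formula. *)

Lemma Series_zero : Series (fun _ => 0) = 0.
Proof.
  rewrite (Series_ext _ (fun n => 0 * 0)) by (intros; ring).
  rewrite Series_scal_l; ring.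
Qed.

Lemma Series_nonneg (a : nat -> R) :
  (forall n, 0 <= a n) -> ex_series a -> 0 <= Series a.
Proof.
  intros Ha Ea. rewrite <- Series_zero.
  apply Series_le; [intros n; split; [lra | apply Ha] | exact Ea].
Qed.

Lemma Series_le_Series (a b : nat -> R) :
  (forall n, a n <= b n) -> ex_series a -> ex_series b -> Series a <= Series b.
Proof.
  intros Hab Ea Eb.
  assert (Hdiff : 0 <= Series (fun n => b n - a n)).
  { apply Series_nonneg; [intros n; specialize (Hab n); lra | exact (ex_series_minus b a Eb Ea)]. }
  rewrite Series_minus in Hdiff by assumption. lra.
Qed.

Lemma Series_ge_term (a : nat -> R) (m : nat) :
  (forall n, 0 <= a n) -> ex_series a -> a m <= Series a.
Proof.
  intros Ha Ea. rewrite (Series_incr_n a (S m)); [|lia|exact Ea]. simpl Nat.pred.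
  assert (0 <= Series (fun k => a (S m + k)%nat)).
  { apply Series_nonneg; [intros; apply Ha | exact (proj1 (ex_series_incr_n a (S m)) Ea)]. }
  destruct m as [|m]; simpl in *; [lra|].
  pose proof (cond_pos_sum a m Ha). lra.
Qed.

Lemma ex_series_Rabs_le (a b : nat -> R) :
  (forall n, Rabs (a n) <= b n) -> ex_series b -> ex_series a.
Proof. intros Hab Eb. exact (ex_series_le a b Hab Eb). Qed.

Lemma ex_series_zero : ex_series (fun _ : nat => 0).
Proof.
  apply (ex_series_Rabs_le _ (fun n => (/ 2) ^ n)).
  - intros n. rewrite Rabs_R0. apply pow_le. lra.
  - apply ex_series_geom. rewrite Rabs_pos_eq; lra.
Qed.

Lemma Series_head (a : nat -> R) :
  (forall n, a (S n) = 0) -> ex_series a /\ Series a = a 0%nat.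
Proof.
  intros Ha.
  assert (Etail : ex_series (fun n => a (S n))).
  { apply (ex_series_ext (fun _ => 0)); [intros n; now rewrite Ha | exact ex_series_zero]. }
  assert (Ea : ex_series a) by exact (proj2 (ex_series_incr_1 a) Etail).
  split; [exact Ea|].
  rewrite Series_incr_1 by exact Ea.
  rewrite (Series_ext _ (fun _ => 0)) by exact Ha. rewrite Series_zero. ring.
Qed.

Lemma Series_diff_le (u v g : nat -> R) (c : R) :
  (forall n, Rabs (u n - v n) <= c * g n) -> ex_series u -> ex_series v -> ex_series g ->
  Rabs (Series u - Series v) <= c * Series g.
Proof.
  intros Hb Eu Ev Eg. rewrite <- Series_minus by assumption.
  assert (Ecg : ex_series (fun n => c * g n)) by exact (ex_series_scal_l c g Eg).
  assert (E : ex_series (fun n => Rabs (u n - v n))).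
  { apply (ex_series_Rabs_le _ (fun n => c * g n)); [|exact Ecg].
    intros n. rewrite Rabs_Rabsolu. apply Hb. }
  eapply Rle_trans; [exact (Series_Rabs _ E)|].
  rewrite <- Series_scal_l. exact (Series_le_Series _ _ Hb E Ecg).
Qed.

Lemma continuity_pt_lipschitz (f : R -> R) (x0 d K : R) : 0 < d -> 0 <= K ->
  (forall x, Rabs (x - x0) < d -> Rabs (f x - f x0) <= K * Rabs (x - x0)) ->
  continuity_pt f x0.
Proof.
  intros Hd HK Hf eps Heps. exists (Rmin d (eps / (K + 1))). split.
  { apply Rmin_glb_lt; [exact Hd | apply Rdiv_lt_0_compat; lra]. }
  intros x [_ Hx]. simpl in *. unfold R_dist in *.
  assert (Hxd : Rabs (x - x0) < d) by (eapply Rlt_le_trans; [exact Hx | apply Rmin_l]).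
  assert (Hxe : Rabs (x - x0) < eps / (K + 1)) by (eapply Rlt_le_trans; [exact Hx | apply Rmin_r]).
  apply (Rmult_lt_compat_l (K + 1)) in Hxe; [|lra].
  replace ((K + 1) * (eps / (K + 1))) with eps in Hxe by (field; lra).
  specialize (Hf x Hxd). pose proof (Rabs_pos (x - x0)). nra.
Qed.

Lemma filterlim_at_right_linear_bound (f : R -> R) (a L C : R) : 0 <= C ->
  (forall y, a < y <= a + 1 -> Rabs (f y - L) <= C * (y - a)) ->
  filterlim f (at_right a) (locally L).
Proof.
  intros HC Hf P [eps HP].
  assert (Hd : 0 < Rmin 1 (eps / (C + 1))).
  { apply Rmin_glb_lt; [lra | apply Rdiv_lt_0_compat; [apply cond_pos | lra]]. }
  exists (mkposreal _ Hd). intros y Hy Hay. apply HP.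
  change (Rabs (y - a) < Rmin 1 (eps / (C + 1))) in Hy.
  change (Rabs (f y - L) < eps).
  rewrite Rabs_pos_eq in Hy by lra.
  assert (Hy1 : y - a < 1) by (eapply Rlt_le_trans; [exact Hy | apply Rmin_l]).
  assert (Hye : y - a < eps / (C + 1)) by (eapply Rlt_le_trans; [exact Hy | apply Rmin_r]).
  apply (Rmult_lt_compat_l (C + 1)) in Hye; [|lra].
  replace ((C + 1) * (eps / (C + 1))) with (pos eps) in Hye by (field; lra).
  specialize (Hf y ltac:(lra)). nra.
Qed.

Lemma Lub_Rbar_max (S : R -> Prop) (v0 : R) :
  S v0 -> (forall v, S v -> v <= v0) -> Lub_Rbar S = Finite v0.
Proof.
  intros Hv0 Hub. apply is_lub_Rbar_unique. split.
  - intros x Hx. exact (Hub x Hx).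
  - intros b Hb. exact (Hb v0 Hv0).
Qed.

(** * Green coefficients *)

(* An index [n : nat] stands for the positive frequency [k = n + 1]. *)
Definition freq (n : nat) : R := INR n + 1.

Lemma freq_ge1 n : 1 <= freq n.
Proof. unfold freq. pose proof (pos_INR n). lra. Qed.

Lemma freq_S n : freq (S n) = freq n + 1.
Proof. unfold freq. rewrite S_INR. ring. Qed.

Lemma freq_0 : freq 0 = 1.
Proof. unfold freq; simpl; ring. Qed.

Lemma freq_1 : freq 1 = 2.
Proof. unfold freq; simpl; ring. Qed.

Lemma freq_le m n : (m <= n)%nat -> freq m <= freq n.
Proof. intros Hmn. unfold freq. apply le_INR in Hmn. lra. Qed.

Lemma IZR_of_nat_S n : IZR (Z.of_nat (S n)) = freq n.
Proof. rewrite <- INR_IZR_INZ, S_INR. reflexivity. Qed.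

Lemma IZR_opp_of_nat_S n : IZR (- Z.of_nat (S n)) = - freq n.
Proof. rewrite opp_IZR, IZR_of_nat_S. reflexivity. Qed.

Lemma zsum0_even (g : R -> R) : (forall x, g (- x) = g x) ->
  zsum0 (fun k => g (IZR k)) = 2 * Series (fun n => g (freq n)).
Proof.
  intros Hg. unfold zsum0. rewrite <- Series_scal_l. apply Series_ext. intros n.
  rewrite IZR_of_nat_S, IZR_opp_of_nat_S, Hg. ring.
Qed.

Lemma sum_telescope_inv_freq N :
  sum_f_R0 (fun n => / freq n - / freq (S n)) N = 1 - / freq (S N).
Proof.
  induction N as [|N IH]; simpl sum_f_R0.
  - rewrite freq_S, freq_0. field.
  - rewrite IH. ring.
Qed.

Lemma ex_series_telescope_inv_freq : ex_series (fun n => / freq n - / freq (S n)).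
Proof.
  exists 1. apply is_series_Reals. intros eps Heps.
  destruct (INR_unbounded (/ eps)) as [N HN].
  exists N. intros n Hn. rewrite sum_telescope_inv_freq. unfold R_dist.
  assert (INR N <= INR n) by (apply le_INR; lia). pose proof (freq_ge1 (S n)).
  assert (Hbig : / eps < freq (S n)) by (unfold freq; rewrite S_INR; lra).
  replace (1 - / freq (S n) - 1) with (- / freq (S n)) by ring.
  rewrite Rabs_Ropp, Rabs_pos_eq by (left; apply Rinv_0_lt_compat; lra).
  rewrite <- (Rinv_inv eps). apply Rinv_lt_contravar; [|exact Hbig].
  apply Rmult_lt_0_compat; [apply Rinv_0_lt_compat|]; lra.
Qed.

Lemma ex_series_inv_freq_sq : ex_series (fun n => / freq n ^ 2).
Proof.
  apply (ex_series_Rabs_le _ (fun n => 2 * (/ freq n - / freq (S n)))).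
  2: exact (ex_series_scal_l 2 _ ex_series_telescope_inv_freq).
  intros n. pose proof (freq_ge1 n). rewrite freq_S.
  rewrite Rabs_pos_eq by (left; apply Rinv_0_lt_compat; nra).
  replace (/ freq n - / (freq n + 1)) with (/ (freq n * (freq n + 1))) by (field; lra).
  apply Rmult_le_reg_l with (freq n ^ 2 * (freq n * (freq n + 1))); [nra|].
  field_simplify; nra.
Qed.

Definition zeta2 : R := Series (fun n => / freq n ^ 2).

Lemma zeta2_nonneg : 0 <= zeta2.
Proof.
  apply Series_nonneg; [|exact ex_series_inv_freq_sq].
  intros n. pose proof (freq_ge1 n). left. apply Rinv_0_lt_compat. nra.
Qed.

Definition green (l : R) (n : nat) : R := / (l + freq n ^ 2).
Definition green_sum (l : R) : R := Series (green l).
Definition green_sq_sum (l : R) : R := Series (fun n => green l n ^ 2).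
Definition green_ksq_sum (l : R) : R := Series (fun n => freq n ^ 2 * green l n ^ 2).
Definition Dgreen (l : R) : R := green_ksq_sum l / green_sq_sum l.
Definition Vgreen (l : R) : R := green_sum l ^ 2 / (PI * green_sq_sum l).

Section Green.

Variable l : R.
Hypothesis Hl : -1 < l.

Lemma green_denom_pos n : 0 < l + freq n ^ 2.
Proof. pose proof (freq_ge1 n). nra. Qed.

Lemma green_pos n : 0 < green l n.
Proof. apply Rinv_0_lt_compat, green_denom_pos. Qed.

Lemma green_mul_denom n : green l n * (l + freq n ^ 2) = 1.
Proof. unfold green. pose proof (green_denom_pos n). field. lra. Qed.

Lemma green_0 : green l 0 = / (l + 1).
Proof. unfold green. rewrite freq_0. f_equal. ring. Qed.

Lemma green_le n : green l n <= / (l + 1).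
Proof.
  unfold green. pose proof (freq_ge1 n). apply Rinv_le_contravar; nra.
Qed.

Lemma green_S_le n : green l (S n) <= / freq n ^ 2.
Proof.
  unfold green. rewrite freq_S. pose proof (freq_ge1 n).
  apply Rinv_le_contravar; nra.
Qed.

Lemma green_antitone m n : l <= m -> green m n <= green l n.
Proof. intros Hlm. unfold green. apply Rinv_le_contravar; [apply green_denom_pos | lra]. Qed.

Lemma ex_green : ex_series (green l).
Proof.
  apply ex_series_incr_1.
  apply (ex_series_Rabs_le _ (fun n => / freq n ^ 2)); [|exact ex_series_inv_freq_sq].
  intros n. rewrite Rabs_pos_eq by (left; apply green_pos). apply green_S_le.
Qed.

Lemma ex_green_sq : ex_series (fun n => green l n ^ 2).
Proof.
  apply (ex_series_Rabs_le _ (fun n => / (l + 1) * green l n)).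
  - intros n. pose proof (green_pos n). pose proof (green_le n).
    rewrite Rabs_pos_eq by nra. nra.
  - exact (ex_series_scal_l _ _ ex_green).
Qed.

Lemma green_ksq n : freq n ^ 2 * green l n ^ 2 = green l n - l * green l n ^ 2.
Proof.
  pose proof (green_mul_denom n) as W.
  replace (freq n ^ 2) with ((l + freq n ^ 2) - l) by ring.
  transitivity (green l n * (green l n * (l + freq n ^ 2)) - l * green l n ^ 2); [ring|].
  rewrite W. ring.
Qed.

Lemma ex_green_ksq : ex_series (fun n => freq n ^ 2 * green l n ^ 2).
Proof.
  apply (ex_series_ext (fun n => green l n - l * green l n ^ 2)).
  - intros n. symmetry. apply green_ksq.
  - exact (ex_series_minus _ _ ex_green (ex_series_scal_l l _ ex_green_sq)).
Qed.

Lemma green_ksq_sum_eq : green_ksq_sum l = green_sum l - l * green_sq_sum l.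
Proof.
  unfold green_ksq_sum, green_sum, green_sq_sum.
  rewrite <- Series_scal_l, <- Series_minus.
  - apply Series_ext. intros n. apply green_ksq.
  - exact ex_green.
  - exact (ex_series_scal_l l _ ex_green_sq).
Qed.

Lemma green_sum_bounds : / (l + 1) <= green_sum l <= / (l + 1) + zeta2.
Proof.
  unfold green_sum. rewrite Series_incr_1 by exact ex_green. rewrite green_0.
  assert (E : ex_series (fun n => green l (S n))) by exact (proj1 (ex_series_incr_1 _) ex_green).
  split.
  - assert (0 <= Series (fun n => green l (S n))); [|lra].
    apply Series_nonneg; [intros n; left; apply green_pos | exact E].
  - assert (Series (fun n => green l (S n)) <= zeta2); [|lra].
    exact (Series_le_Series _ _ green_S_le E ex_series_inv_freq_sq).
Qed.

Lemma green_sq_sum_bounds : / (l + 1) ^ 2 <= green_sq_sum l <= / (l + 1) ^ 2 + zeta2.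
Proof.
  unfold green_sq_sum. rewrite Series_incr_1 by exact ex_green_sq.
  rewrite green_0, pow_inv.
  assert (E : ex_series (fun n => green l (S n) ^ 2))
    by exact (proj1 (ex_series_incr_1 _) ex_green_sq).
  split.
  - assert (0 <= Series (fun n => green l (S n) ^ 2)); [|lra].
    apply Series_nonneg; [intros n; apply pow2_ge_0 | exact E].
  - assert (Series (fun n => green l (S n) ^ 2) <= zeta2); [|lra].
    apply (Series_le_Series _ _); [|exact E | exact ex_series_inv_freq_sq].
    intros n. pose proof (green_S_le n). pose proof (green_pos (S n)).
    assert (/ freq n ^ 2 <= 1).
    { pose proof (freq_ge1 n). rewrite <- Rinv_1. apply Rinv_le_contravar; nra. }
    nra.
Qed.

Lemma green_sum_pos : 0 < green_sum l.
Proof.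
  pose proof green_sum_bounds. assert (0 < / (l + 1)) by (apply Rinv_0_lt_compat; lra). lra.
Qed.

Lemma green_sq_sum_pos : 0 < green_sq_sum l.
Proof.
  pose proof green_sq_sum_bounds.
  assert (0 < / (l + 1) ^ 2) by (apply Rinv_0_lt_compat; nra). lra.
Qed.

Lemma Dgreen_eq : Dgreen l = green_sum l / green_sq_sum l - l.
Proof.
  unfold Dgreen. rewrite green_ksq_sum_eq. pose proof green_sq_sum_pos. field. lra.
Qed.

Lemma zsum0_green_sum : zsum0 (fun k => 1 / (l + IZR k ^ 2)) = 2 * green_sum l.
Proof.
  rewrite (zsum0_even (fun x => 1 / (l + x ^ 2))) by (intros x; f_equal; ring).
  f_equal. apply Series_ext. intros n. unfold green, Rdiv. ring.
Qed.

Lemma zsum0_green_sq_sum : zsum0 (fun k => 1 / (l + IZR k ^ 2) ^ 2) = 2 * green_sq_sum l.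
Proof.
  rewrite (zsum0_even (fun x => 1 / (l + x ^ 2) ^ 2)) by (intros x; f_equal; ring).
  f_equal. apply Series_ext. intros n. unfold green, Rdiv. rewrite pow_inv. ring.
Qed.

Lemma zsum0_green_ksq_sum :
  zsum0 (fun k => IZR k ^ 2 / (l + IZR k ^ 2) ^ 2) = 2 * green_ksq_sum l.
Proof.
  rewrite (zsum0_even (fun x => x ^ 2 / (l + x ^ 2) ^ 2)) by (intros x; f_equal; ring).
  f_equal. apply Series_ext. intros n. unfold green, Rdiv. rewrite pow_inv. ring.
Qed.

Lemma Dfun_eq : Dfun l = Dgreen l.
Proof.
  unfold Dfun, Dgreen. rewrite zsum0_green_ksq_sum, zsum0_green_sq_sum.
  pose proof green_sq_sum_pos. field. lra.
Qed.

Lemma Vformula_eq : Vformula l = Vgreen l.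
Proof.
  unfold Vformula, Vgreen. rewrite zsum0_green_sum, zsum0_green_sq_sum.
  pose proof green_sq_sum_pos. pose proof PI_RGT_0. field. lra.
Qed.

End Green.

(** * Completing the square *)

Lemma ex_series_of_ex_series_ksq (x : nat -> R) :
  ex_series (fun n => freq n ^ 2 * x n ^ 2) -> ex_series x.
Proof.
  intros E. apply (ex_series_Rabs_le _ (fun n => (freq n ^ 2 * x n ^ 2 + / freq n ^ 2) / 2)).
  - intros n. pose proof (freq_ge1 n). set (K := freq n ^ 2).
    assert (HK : 0 < K) by (unfold K; nra).
    assert (Hsq : 0 <= (K * Rabs (x n) - 1) ^ 2 * / K).
    { apply Rmult_le_pos; [apply pow2_ge_0 | left; apply Rinv_0_lt_compat; lra]. }
    replace ((K * Rabs (x n) - 1) ^ 2 * / K) with (K * x n ^ 2 + / K - 2 * Rabs (x n)) in Hsq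
      by (rewrite <- (pow2_abs (x n)); field; lra).
    lra.
  - apply ex_series_scal_r, (ex_series_plus _ _ E ex_series_inv_freq_sq).
Qed.


Section Completing_the_square.

Variables (l : R) (x : nat -> R).
Hypotheses (Hl : -1 < l) (Ex2 : ex_series (fun n => x n ^ 2))
  (Ekx2 : ex_series (fun n => freq n ^ 2 * x n ^ 2)).

Definition green_energy : R :=
  l * Series (fun n => x n ^ 2) + Series (fun n => freq n ^ 2 * x n ^ 2).

(* Since [(l + k^2) * green l n = 1], the expanded square has the cross term [-2 al x n] and
   the constant term [al^2 green l n]. *)
Lemma is_series_green_square (al : R) :
  is_series (fun n => (l + freq n ^ 2) * (x n - al * green l n) ^ 2)
    (green_energy - 2 * al * Series x + al ^ 2 * green_sum l).
Proof.
  pose proof (ex_series_of_ex_series_ksq x Ekx2) as Ex.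
  apply (is_series_ext (fun n => plus (plus (plus (scal l (x n ^ 2)) (freq n ^ 2 * x n ^ 2))
                                   (scal (-2 * al) (x n))) (scal (al ^ 2) (green l n)))).
  - intros n. pose proof (green_mul_denom l Hl n) as W.
    set (g := green l n) in *. set (w := l + freq n ^ 2) in *.
    replace (freq n ^ 2) with (w - l) by (unfold w; ring).
    unfold plus, scal; simpl; unfold mult; simpl.
    symmetry. transitivity (w * x n ^ 2 - 2 * al * x n * (g * w) + al ^ 2 * g * (g * w)); [ring|].
    rewrite W. ring.
  - replace (green_energy - 2 * al * Series x + al ^ 2 * green_sum l)
      with (plus (plus (plus (scal l (Series (fun n => x n ^ 2)))
                             (Series (fun n => freq n ^ 2 * x n ^ 2)))
                       (scal (-2 * al) (Series x))) (scal (al ^ 2) (green_sum l)))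
      by (unfold green_energy, plus, scal; simpl; unfold mult; simpl; ring).
    exact (is_series_plus _ _ _ _
             (is_series_plus _ _ _ _
                (is_series_plus _ _ _ _ (is_series_scal_l _ _ _ (Series_correct _ Ex2))
                   (Series_correct _ Ekx2))
                (is_series_scal_l _ _ _ (Series_correct _ Ex)))
             (is_series_scal_l _ _ _ (Series_correct _ (ex_green l Hl)))).
Qed.

Lemma green_square_term_nonneg (al : R) n :
  0 <= (l + freq n ^ 2) * (x n - al * green l n) ^ 2.
Proof. apply Rmult_le_pos; [left; apply (green_denom_pos l Hl) | apply pow2_ge_0]. Qed.

Lemma green_square_at_optimum :
  green_sum l * (green_energy - 2 * (Series x / green_sum l) * Series x
                 + (Series x / green_sum l) ^ 2 * green_sum l)
  = green_sum l * green_energy - Series x ^ 2.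
Proof. pose proof (green_sum_pos l Hl). field. lra. Qed.

Lemma green_cauchy_schwarz : Series x ^ 2 <= green_sum l * green_energy.
Proof.
  pose proof (is_series_green_square (Series x / green_sum l)) as Hs.
  pose proof (green_sum_pos l Hl).
  assert (Hopt : 0 <= green_sum l * (green_energy - 2 * (Series x / green_sum l) * Series x
                                     + (Series x / green_sum l) ^ 2 * green_sum l)).
  { apply Rmult_le_pos; [lra|]. rewrite <- (is_series_unique _ _ Hs).
    apply Series_nonneg; [apply green_square_term_nonneg | eexists; exact Hs]. }
  rewrite green_square_at_optimum in Hopt. lra.
Qed.

Lemma green_cauchy_schwarz_strict :
  (forall al, exists n, x n <> al * green l n) ->
  Series x ^ 2 < green_sum l * green_energy.
Proof.
  intros Hnp. destruct (Hnp (Series x / green_sum l)) as [m Hm].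
  pose proof (is_series_green_square (Series x / green_sum l)) as Hs.
  pose proof (green_sum_pos l Hl).
  assert (Hopt : 0 < green_sum l * (green_energy - 2 * (Series x / green_sum l) * Series x
                                    + (Series x / green_sum l) ^ 2 * green_sum l)).
  { apply Rmult_lt_0_compat; [lra|]. rewrite <- (is_series_unique _ _ Hs).
    eapply Rlt_le_trans;
      [|apply Series_ge_term with (m := m); [apply green_square_term_nonneg | eexists; exact Hs]].
    apply Rmult_lt_0_compat; [apply (green_denom_pos l Hl)|].
    apply pow2_gt_0. lra. }
  rewrite green_square_at_optimum in Hopt. lra.
Qed.

End Completing_the_square.

Lemma green_cauchy_schwarz_pair l (x y : nat -> R) : -1 < l ->
  ex_series (fun n => x n ^ 2) -> ex_series (fun n => freq n ^ 2 * x n ^ 2) ->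
  ex_series (fun n => y n ^ 2) -> ex_series (fun n => freq n ^ 2 * y n ^ 2) ->
  Series (fun n => x n + y n) ^ 2 <= 2 * green_sum l * (green_energy l x + green_energy l y).
Proof.
  intros Hl Ex2 Ekx2 Ey2 Eky2.
  pose proof (green_cauchy_schwarz l x Hl Ex2 Ekx2).
  pose proof (green_cauchy_schwarz l y Hl Ey2 Eky2).
  rewrite Series_plus by (apply ex_series_of_ex_series_ksq; assumption).
  pose proof (pow2_ge_0 (Series x - Series y)). nra.
Qed.

(** * The function D *)

Lemma green_not_proportional l1 l2 : -1 < l1 -> -1 < l2 -> l1 <> l2 ->
  forall al, exists n, green l2 n <> al * green l1 n.
Proof.
  intros H1 H2 Hne al.
  destruct (Req_dec (green l2 0) (al * green l1 0)) as [E0|E0]; [|now exists 0%nat].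
  exists 1%nat. intros E1. apply Hne.
  pose proof (green_mul_denom l1 H1 0) as W10. pose proof (green_mul_denom l1 H1 1) as W11.
  pose proof (green_mul_denom l2 H2 0) as W20. pose proof (green_mul_denom l2 H2 1) as W21.
  rewrite freq_0 in W10, W20. rewrite freq_1 in W11, W21.
  assert (A0 : l1 + 1 = al * (l2 + 1)).
  { transitivity (green l2 0 * (l2 + 1 ^ 2) * (l1 + 1)); [rewrite W20; ring|].
    rewrite E0. transitivity (al * (l2 + 1) * (green l1 0 * (l1 + 1 ^ 2))); [ring|].
    rewrite W10. ring. }
  assert (A1 : l1 + 4 = al * (l2 + 4)).
  { transitivity (green l2 1 * (l2 + 2 ^ 2) * (l1 + 4)); [rewrite W21; ring|].
    rewrite E1. transitivity (al * (l2 + 4) * (green l1 1 * (l1 + 2 ^ 2))); [ring|].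
    rewrite W11. ring. }
  nra.
Qed.

Lemma Dgreen_cross l1 l2 : -1 < l1 -> -1 < l2 -> l1 <> l2 ->
  green_sum l2 * (Dgreen l2 + l2) < green_sum l1 * (l1 + Dgreen l2).
Proof.
  intros H1 H2 Hne.
  pose proof (green_cauchy_schwarz_strict l1 (green l2) H1 (ex_green_sq l2 H2) (ex_green_ksq l2 H2)
                (green_not_proportional l1 l2 H1 H2 Hne)) as CS.
  unfold green_energy in CS. fold (green_sum l2) (green_sq_sum l2) (green_ksq_sum l2) in CS.
  pose proof (green_sq_sum_pos l2 H2) as G2.
  assert (Ek : green_ksq_sum l2 = green_sq_sum l2 * Dgreen l2) by (unfold Dgreen; field; lra).
  assert (E1 : green_sum l2 = green_sq_sum l2 * (Dgreen l2 + l2))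
    by (rewrite Dgreen_eq by exact H2; field; lra).
  apply Rmult_lt_reg_l with (green_sq_sum l2); [exact G2|].
  replace (green_sq_sum l2 * (green_sum l2 * (Dgreen l2 + l2)))
    with (green_sum l2 * (green_sq_sum l2 * (Dgreen l2 + l2))) by ring.
  rewrite <- E1. rewrite Ek in CS. nra.
Qed.

Lemma Dgreen_add_pos l : -1 < l -> 0 < Dgreen l + l.
Proof.
  intros Hl. rewrite Dgreen_eq by exact Hl.
  pose proof (green_sum_pos l Hl). pose proof (green_sq_sum_pos l Hl).
  replace (green_sum l / green_sq_sum l - l + l) with (green_sum l / green_sq_sum l) by ring.
  apply Rdiv_lt_0_compat; assumption.
Qed.

(* Multiplying the cross inequalities for [(l1, l2)] and [(l2, l1)] leaves
   [0 < (l2 - l1) (Dgreen l2 - Dgreen l1)]. *)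
Lemma Dgreen_increasing l1 l2 : -1 < l1 -> l1 < l2 -> Dgreen l1 < Dgreen l2.
Proof.
  intros H1 H12. assert (H2 : -1 < l2) by lra. assert (Hne : l1 <> l2) by lra.
  pose proof (Dgreen_cross l1 l2 H1 H2 Hne) as A.
  pose proof (Dgreen_cross l2 l1 H2 H1 (not_eq_sym Hne)) as B.
  pose proof (green_sum_pos l1 H1). pose proof (green_sum_pos l2 H2).
  pose proof (Dgreen_add_pos l1 H1). pose proof (Dgreen_add_pos l2 H2).
  set (P1 := green_sum l1) in *. set (P2 := green_sum l2) in *.
  set (F1 := Dgreen l1) in *. set (F2 := Dgreen l2) in *.
  assert (0 < l1 + F2) by nra. assert (0 < l2 + F1) by nra.
  assert (P1 * P2 * ((F2 + l2) * (F1 + l1)) < P1 * P2 * ((l1 + F2) * (l2 + F1))).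
  { replace (P1 * P2 * ((F2 + l2) * (F1 + l1))) with ((P2 * (F2 + l2)) * (P1 * (F1 + l1))) by ring.
    replace (P1 * P2 * ((l1 + F2) * (l2 + F1))) with ((P1 * (l1 + F2)) * (P2 * (l2 + F1))) by ring.
    apply Rmult_le_0_lt_compat; nra. }
  assert ((F2 + l2) * (F1 + l1) < (l1 + F2) * (l2 + F1)).
  { apply Rmult_lt_reg_l with (P1 * P2); [nra | lra]. }
  nra.
Qed.

Lemma Dgreen_lt_reflect l1 l2 : -1 < l1 -> -1 < l2 -> Dgreen l1 < Dgreen l2 -> l1 < l2.
Proof.
  intros H1 H2 HD. destruct (Rlt_le_dec l1 l2) as [h|[h|h]]; [exact h| |subst; lra].
  pose proof (Dgreen_increasing l2 l1 H2 h). lra.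
Qed.

Lemma green_diff x y n : -1 < x -> -1 < y ->
  green x n - green y n = (y - x) * green x n * green y n.
Proof.
  intros Hx Hy. unfold green.
  pose proof (green_denom_pos x Hx n). pose proof (green_denom_pos y Hy n). field. lra.
Qed.

Lemma green_sum_continuous x0 : -1 < x0 -> continuity_pt green_sum x0.
Proof.
  intros H0. set (lb := (x0 - 1) / 2). assert (Hlb : -1 < lb) by (unfold lb; lra).
  apply (continuity_pt_lipschitz _ x0 ((x0 + 1) / 2) (green_sq_sum lb));
    [lra | left; apply green_sq_sum_pos; exact Hlb|].
  intros x Hx. apply Rabs_lt_between in Hx.
  assert (Hxl : lb <= x) by (unfold lb; lra). assert (Hx1 : -1 < x) by lra.
  rewrite Rmult_comm.
  apply Series_diff_le;
    [|exact (ex_green x Hx1) | exact (ex_green x0 H0) | exact (ex_green_sq lb Hlb)].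
  intros n. rewrite green_diff by lra.
  pose proof (green_pos x Hx1 n). pose proof (green_pos x0 H0 n).
  pose proof (green_antitone lb Hlb x n Hxl).
  pose proof (green_antitone lb Hlb x0 n ltac:(unfold lb; lra)).
  rewrite !Rabs_mult, (Rabs_pos_eq (green x n)), (Rabs_pos_eq (green x0 n)) by lra.
  rewrite <- Rabs_Ropp. replace (- (x0 - x)) with (x - x0) by ring.
  pose proof (Rabs_pos (x - x0)).
  rewrite Rmult_assoc. apply Rmult_le_compat_l; [lra|].
  simpl. rewrite Rmult_1_r. apply Rmult_le_compat; lra.
Qed.

Lemma green_sq_sum_continuous x0 : -1 < x0 -> continuity_pt green_sq_sum x0.
Proof.
  intros H0. set (lb := (x0 - 1) / 2). assert (Hlb : -1 < lb) by (unfold lb; lra).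
  pose proof (green_sq_sum_pos lb Hlb).
  apply (continuity_pt_lipschitz _ x0 ((x0 + 1) / 2) (2 / (lb + 1) * green_sq_sum lb)); [lra| |].
  { apply Rmult_le_pos; [apply Rlt_le, Rdiv_lt_0_compat|]; lra. }
  intros x Hx. apply Rabs_lt_between in Hx.
  assert (Hxl : lb <= x) by (unfold lb; lra). assert (Hx1 : -1 < x) by lra.
  replace (2 / (lb + 1) * green_sq_sum lb * Rabs (x - x0))
    with ((Rabs (x - x0) * (2 / (lb + 1))) * green_sq_sum lb) by ring.
  apply Series_diff_le;
    [|exact (ex_green_sq x Hx1) | exact (ex_green_sq x0 H0) | exact (ex_green_sq lb Hlb)].
  intros n.
  replace (green x n ^ 2 - green x0 n ^ 2)
    with ((green x n - green x0 n) * (green x n + green x0 n)) by ring.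
  rewrite green_diff by lra.
  pose proof (green_pos x Hx1 n). pose proof (green_pos x0 H0 n).
  pose proof (green_antitone lb Hlb x n Hxl).
  pose proof (green_antitone lb Hlb x0 n ltac:(unfold lb; lra)).
  pose proof (green_le lb Hlb n).
  rewrite !Rabs_mult, (Rabs_pos_eq (green x n)), (Rabs_pos_eq (green x0 n)),
    (Rabs_pos_eq (green x n + green x0 n)) by lra.
  rewrite <- Rabs_Ropp. replace (- (x0 - x)) with (x - x0) by ring.
  pose proof (Rabs_pos (x - x0)).
  rewrite !Rmult_assoc. apply Rmult_le_compat_l; [lra|].
  assert (green x n * green x0 n <= green lb n ^ 2)
    by (simpl; rewrite Rmult_1_r; apply Rmult_le_compat; lra).
  assert (green x n + green x0 n <= 2 / (lb + 1)) by (unfold Rdiv; lra).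
  replace (green x n * (green x0 n * (green x n + green x0 n)))
    with ((green x n * green x0 n) * (green x n + green x0 n)) by ring.
  replace (2 / (lb + 1) * green lb n ^ 2) with (green lb n ^ 2 * (2 / (lb + 1))) by ring.
  apply Rmult_le_compat; nra.
Qed.

Section Dgreen_range.

Variable l : R.
Hypothesis Hl : -1 < l.

Lemma ex_green_ksq_sub_sq : ex_series (fun n => (freq n ^ 2 - 1) * green l n ^ 2).
Proof.
  apply (ex_series_ext (fun n => freq n ^ 2 * green l n ^ 2 - green l n ^ 2));
    [intros n; simpl; ring|].
  exact (ex_series_minus _ _ (ex_green_ksq l Hl) (ex_green_sq l Hl)).
Qed.

Lemma green_ksq_sub_sq_sum :
  green_ksq_sum l - green_sq_sum l = Series (fun n => (freq n ^ 2 - 1) * green l n ^ 2).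
Proof.
  unfold green_ksq_sum, green_sq_sum.
  rewrite <- Series_minus by (apply ex_green_ksq || apply ex_green_sq; exact Hl).
  apply Series_ext. intros; ring.
Qed.

Lemma green_ksq_sub_sq_term_nonneg n : 0 <= (freq n ^ 2 - 1) * green l n ^ 2.
Proof. pose proof (freq_ge1 n). apply Rmult_le_pos; [nra | apply pow2_ge_0]. Qed.

Lemma green_ksq_sub_sq_term_le n : (freq n ^ 2 - 1) * green l n ^ 2 <= 2 / freq n ^ 2.
Proof.
  destruct n as [|n].
  - rewrite freq_0. pose proof (pow2_ge_0 (green l 0)). replace (1 ^ 2 - 1) with 0 by ring. lra.
  - assert (Hk : 2 <= freq (S n)) by (rewrite freq_S; pose proof (freq_ge1 n); lra).
    set (K := freq (S n) ^ 2). assert (HK : 4 <= K) by (unfold K; nra).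
    pose proof (green_mul_denom l Hl (S n)) as W. fold K in W.
    pose proof (green_pos l Hl (S n)). set (g := green l (S n)) in *.
    assert (Hg : g * (K - 1) <= 1) by nra.
    assert (g <= / (K - 1)) by (apply Rmult_le_reg_r with (K - 1); [lra | rewrite Rinv_l; lra]).
    assert (/ (K - 1) <= 2 / K).
    { apply Rmult_le_reg_r with (K * (K - 1)); [nra|].
      replace (/ (K - 1) * (K * (K - 1))) with K by (field; lra).
      replace (2 / K * (K * (K - 1))) with (2 * (K - 1)) by (field; lra). lra. }
    nra.
Qed.

Lemma Dgreen_gt_1 : 1 < Dgreen l.
Proof.
  pose proof (green_sq_sum_pos l Hl).
  assert (0 < green_ksq_sum l - green_sq_sum l).
  { rewrite green_ksq_sub_sq_sum.
    eapply Rlt_le_trans;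
      [|apply (Series_ge_term _ 1);
          [apply green_ksq_sub_sq_term_nonneg | apply ex_green_ksq_sub_sq]].
    cbv beta. rewrite freq_1. pose proof (green_pos l Hl 1). nra. }
  unfold Dgreen. apply Rmult_lt_reg_r with (green_sq_sum l); [lra|].
  unfold Rdiv. rewrite Rmult_assoc, Rinv_l by lra. lra.
Qed.

Lemma Dgreen_sub_1_le : Dgreen l - 1 <= 2 * zeta2 * (l + 1) ^ 2.
Proof.
  pose proof (green_sq_sum_pos l Hl). destruct (green_sq_sum_bounds l Hl) as [G2 _].
  assert (HN : green_ksq_sum l - green_sq_sum l <= 2 * zeta2).
  { rewrite green_ksq_sub_sq_sum. unfold zeta2. rewrite <- Series_scal_l.
    apply Series_le_Series;
      [apply green_ksq_sub_sq_term_le | apply ex_green_ksq_sub_sq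
      | exact (ex_series_scal_l 2 _ ex_series_inv_freq_sq)]. }
  assert (E : Dgreen l - 1 = (green_ksq_sum l - green_sq_sum l) / green_sq_sum l)
    by (unfold Dgreen; field; lra).
  rewrite E. pose proof zeta2_nonneg.
  apply Rmult_le_reg_r with (green_sq_sum l); [lra|].
  unfold Rdiv. rewrite Rmult_assoc, Rinv_l, Rmult_1_r by lra.
  assert (1 <= (l + 1) ^ 2 * green_sq_sum l).
  { apply Rle_trans with ((l + 1) ^ 2 * / (l + 1) ^ 2); [right; field; lra|].
    apply Rmult_le_compat_l; [apply pow2_ge_0 | exact G2]. }
  nra.
Qed.

End Dgreen_range.

(* Split [green_sq_sum] at [n = M]: the head has [M + 1] terms of size at most [1 / L^4] and the
   tail is at most [green_ksq_sum / L^2], while [green_ksq_sum] is at least its [M]-th term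
   [1 / (4 L^2)]. *)
Lemma Dgreen_at_freq_sq M : freq M / 5 <= Dgreen (freq M ^ 2).
Proof.
  set (L := freq M). assert (HL : 1 <= L) by apply freq_ge1.
  set (l := L ^ 2). assert (Hl : -1 < l) by (unfold l; nra).
  assert (Hl1 : 1 <= l) by (unfold l; nra).
  set (u := fun n => freq n ^ 2 * green l n ^ 2).
  set (v := fun n => green l n ^ 2).
  assert (Eu := ex_green_ksq l Hl). assert (Ev := ex_green_sq l Hl).
  fold u in Eu. fold v in Ev.
  assert (Etu : ex_series (fun j => u (S M + j)%nat))
    by exact (proj1 (ex_series_incr_n u (S M)) Eu).
  assert (Etv : ex_series (fun j => v (S M + j)%nat))
    by exact (proj1 (ex_series_incr_n v (S M)) Ev).
  assert (Ku : green_ksq_sum l = sum_f_R0 u M + Series (fun j => u (S M + j)%nat))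
    by exact (Series_incr_n u (S M) ltac:(lia) Eu).
  assert (K2 : green_sq_sum l = sum_f_R0 v M + Series (fun j => v (S M + j)%nat))
    by exact (Series_incr_n v (S M) ltac:(lia) Ev).
  assert (Hu : forall n, 0 <= u n) by (intros n; unfold u; apply Rmult_le_pos; apply pow2_ge_0).
  assert (Hk_lb : / (4 * L ^ 2) <= green_ksq_sum l).
  { assert (HuM : u M = / (4 * L ^ 2))
      by (unfold u, green; change (freq M) with L; unfold l; field; split; nra).
    rewrite <- HuM. exact (Series_ge_term u M Hu Eu). }
  assert (Hhead : sum_f_R0 v M <= / l ^ 2 * L).
  { apply Rle_trans with (sum_f_R0 (fun _ => / l ^ 2) M).
    - apply sum_Rle. intros n _. unfold v. rewrite <- pow_inv.
      pose proof (green_pos l Hl n).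
      assert (green l n <= / l)
        by (unfold green; apply Rinv_le_contravar; pose proof (freq_ge1 n); nra).
      apply pow_incr. lra.
    - rewrite sum_cte. unfold L, freq. rewrite S_INR. lra. }
  assert (Htail : Series (fun j => v (S M + j)%nat) <= / L ^ 2 * Series (fun j => u (S M + j)%nat)).
  { rewrite <- Series_scal_l.
    apply Series_le_Series; [|exact Etv | exact (ex_series_scal_l _ _ Etu)].
    intros j. unfold u, v.
    assert (L <= freq (S M + j)) by (apply freq_le; lia).
    assert (1 <= / L ^ 2 * freq (S M + j) ^ 2).
    { apply Rmult_le_reg_l with (L ^ 2); [nra|].
      rewrite <- Rmult_assoc, Rinv_r by nra. nra. }
    pose proof (pow2_ge_0 (green l (S M + j)%nat)). nra. }
  assert (Htail_k : Series (fun j => u (S M + j)%nat) <= green_ksq_sum l).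
  { rewrite Ku. pose proof (cond_pos_sum u M Hu). lra. }
  pose proof (green_sq_sum_pos l Hl) as G2.
  assert (Hmain : L * green_sq_sum l <= 5 * green_ksq_sum l).
  { assert (0 < / L ^ 2) by (apply Rinv_0_lt_compat; nra).
    assert (HG2 : green_sq_sum l <= / l ^ 2 * L + / L ^ 2 * green_ksq_sum l) by nra.
    apply Rle_trans with (L * (/ l ^ 2 * L + / L ^ 2 * green_ksq_sum l));
      [apply Rmult_le_compat_l; lra|].
    replace (L * (/ l ^ 2 * L + / L ^ 2 * green_ksq_sum l))
      with (4 * / (4 * L ^ 2) + / L * green_ksq_sum l) by (unfold l; field; lra).
    assert (/ L <= 1) by (rewrite <- Rinv_1; apply Rinv_le_contravar; lra).
    assert (0 < / (4 * L ^ 2)) by (apply Rinv_0_lt_compat; nra).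
    nra. }
  unfold Dgreen. apply Rmult_le_reg_r with (5 * green_sq_sum l); [lra|].
  replace (green_ksq_sum l / green_sq_sum l * (5 * green_sq_sum l)) with (5 * green_ksq_sum l)
    by (field; lra).
  replace (L / 5 * (5 * green_sq_sum l)) with (L * green_sq_sum l) by field. exact Hmain.
Qed.

Lemma Dgreen_surjective D : 1 < D -> exists l, -1 < l /\ Dgreen l = D.
Proof.
  intros HD. pose proof zeta2_nonneg.
  set (e := Rmin 1 ((D - 1) / (2 * zeta2 + 1))).
  assert (He : 0 < e) by (apply Rmin_glb_lt; [lra | apply Rdiv_lt_0_compat; lra]).
  assert (He1 : e <= 1) by apply Rmin_l.
  assert (He2 : e * (2 * zeta2 + 1) <= D - 1).
  { apply Rle_trans with ((D - 1) / (2 * zeta2 + 1) * (2 * zeta2 + 1)); [|right; field; lra].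
    apply Rmult_le_compat_r; [lra | apply Rmin_r]. }
  set (lo := -1 + e). assert (Hlo : -1 < lo) by (unfold lo; lra).
  assert (Dlo : Dgreen lo < D).
  { pose proof (Dgreen_sub_1_le lo Hlo) as B. replace (lo + 1) with e in B by (unfold lo; ring).
    nra. }
  destruct (INR_unbounded (5 * D)) as [n Hn].
  set (hi := freq n ^ 2). assert (Hhi : -1 < hi) by (unfold hi; pose proof (freq_ge1 n); nra).
  assert (Dhi : D < Dgreen hi).
  { pose proof (Dgreen_at_freq_sq n) as B. fold hi in B.
    assert (5 * D < freq n) by (unfold freq; lra). lra. }
  pose proof (Dgreen_lt_reflect lo hi Hlo Hhi ltac:(lra)) as Hlohi.
  set (h := fun x => green_sum x / green_sq_sum x - x - D).
  assert (Eh : forall x, -1 < x -> Dgreen x = h x + D)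
    by (intros x Hx; unfold h; rewrite Dgreen_eq; [ring | exact Hx]).
  destruct (Ranalysis5.IVT_interv h lo hi) as [z [Hz Hhz]].
  - intros x Hx. assert (Hx1 : -1 < x) by lra. unfold h.
    apply continuity_pt_minus;
      [apply continuity_pt_minus | apply continuity_pt_const; intros ? ?; reflexivity].
    + apply continuity_pt_div;
        [apply green_sum_continuous | apply green_sq_sum_continuous
        | pose proof (green_sq_sum_pos x)]; lra.
    + apply continuity_pt_id.
  - exact Hlohi.
  - rewrite Eh in Dlo by exact Hlo. lra.
  - rewrite Eh in Dhi by exact Hhi. lra.
  - exists z. split; [lra|]. rewrite Eh by lra. rewrite Hhz. ring.
Qed.

Section Dgreen_inverse.

Variable lam : R -> R.
Hypothesis Hlam : forall D, 1 < D -> -1 < lam D /\ Dgreen (lam D) = D.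

Lemma Dgreen_inverse_lt D p : 1 < D -> -1 < p -> D < Dgreen p -> lam D < p.
Proof.
  intros HD Hp HDp. destruct (Hlam D HD) as [Hl HlD].
  apply Dgreen_lt_reflect; [exact Hl | exact Hp | lra].
Qed.

Lemma Dgreen_inverse_gt D p : 1 < D -> -1 < p -> Dgreen p < D -> p < lam D.
Proof.
  intros HD Hp HDp. destruct (Hlam D HD) as [Hl HlD].
  apply Dgreen_lt_reflect; [exact Hp | exact Hl | lra].
Qed.

Lemma Dgreen_inverse_at_1 : filterlim lam (at_right 1) (locally (-1)).
Proof.
  intros P [eps HP].
  set (e := Rmin (eps / 2) 1).
  assert (He : 0 < e) by (apply Rmin_glb_lt; [pose proof (cond_pos eps) | ]; lra).
  assert (Hee : e < eps)
    by (pose proof (Rmin_l (eps / 2) 1); pose proof (cond_pos eps); unfold e; lra).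
  assert (Hp : -1 < -1 + e) by lra.
  pose proof (Dgreen_gt_1 (-1 + e) Hp).
  assert (Hd : 0 < Dgreen (-1 + e) - 1) by lra.
  exists (mkposreal _ Hd). intros D HD HD1. apply HP.
  change (Rabs (D - 1) < Dgreen (-1 + e) - 1) in HD.
  change (Rabs (lam D - -1) < eps).
  rewrite Rabs_pos_eq in HD by lra.
  pose proof (Dgreen_inverse_lt D (-1 + e) HD1 Hp ltac:(lra)).
  pose proof (proj1 (Hlam D HD1)).
  rewrite Rabs_pos_eq; lra.
Qed.

Lemma Dgreen_inverse_at_infty : filterlim lam (Rbar_locally p_infty) (Rbar_locally p_infty).
Proof.
  intros P [M HP].
  set (p := Rmax M 0). assert (Hp : -1 < p) by (pose proof (Rmax_r M 0); unfold p; lra).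
  exists (Rmax 1 (Dgreen p)). intros D HD.
  pose proof (Rmax_l 1 (Dgreen p)). pose proof (Rmax_r 1 (Dgreen p)). pose proof (Rmax_l M 0).
  apply HP. pose proof (Dgreen_inverse_gt D p ltac:(lra) Hp ltac:(lra)). unfold p in *. lra.
Qed.

End Dgreen_inverse.

(** * Fourier coefficients and the value of V *)

Lemma Cmod_sq (z : C) : Cmod z ^ 2 = fst z ^ 2 + snd z ^ 2.
Proof. unfold Cmod. apply pow2_sqrt. nra. Qed.

Definition coef_pos (c : Z -> C) (n : nat) : C := c (Z.of_nat (S n)).
Definition coef_neg (c : Z -> C) (n : nat) : C := c (- Z.of_nat (S n))%Z.

Lemma fourier_eval_0 c :
  fourier_eval c 0 = (Series (fun n => fst (coef_pos c n) + fst (coef_neg c n)),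
                      Series (fun n => snd (coef_pos c n) + snd (coef_neg c n))).
Proof.
  unfold fourier_eval, zsum0, coef_pos, coef_neg.
  f_equal; apply Series_ext; intros n; rewrite !Rmult_0_r, cos_0, sin_0;
    destruct (c (Z.of_nat (S n))), (c (- Z.of_nat (S n))%Z); unfold Re, Im, Cmult; simpl; ring.
Qed.

Lemma L2norm2_eq c :
  L2norm2 c = 2 * PI * Series (fun n => Cmod (coef_pos c n) ^ 2 + Cmod (coef_neg c n) ^ 2).
Proof. reflexivity. Qed.

Lemma L2norm2_deriv_eq c :
  L2norm2_deriv c
  = 2 * PI * Series (fun n => freq n ^ 2 * (Cmod (coef_pos c n) ^ 2 + Cmod (coef_neg c n) ^ 2)).
Proof.
  unfold L2norm2_deriv, zsum0, coef_pos, coef_neg. f_equal. apply Series_ext. intros n.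
  rewrite IZR_of_nat_S, IZR_opp_of_nat_S. ring.
Qed.

Lemma zsummable0_ex_series f :
  zsummable0 f -> ex_series (fun n => f (Z.of_nat (S n)) + f (- Z.of_nat (S n))%Z).
Proof. apply ex_series_Rabs_le. intros n. apply Rabs_triang. Qed.

Lemma Series_plus4 (a b c d : nat -> R) :
  ex_series a -> ex_series b -> ex_series c -> ex_series d ->
  Series (fun n => a n + b n + c n + d n) = Series a + Series b + Series c + Series d.
Proof.
  intros Ea Eb Ec Ed.
  assert (Eab := ex_series_plus _ _ Ea Eb). assert (Eabc := ex_series_plus _ _ Eab Ec).
  rewrite Series_plus by assumption. rewrite Series_plus by assumption.
  rewrite Series_plus by assumption. reflexivity.
Qed.

(* [Re u(0)] and [Im u(0)] are the pair sums of [Re c_k, Re c_-k] and [Im c_k, Im c_-k]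
   ([k >= 1]), and these four real sequences share the energy of [c]. *)
Lemma fourier_eval_0_bound c l : H1per_mean0 c -> -1 < l ->
  Cmod (fourier_eval c 0) ^ 2 <= (l * L2norm2 c + L2norm2_deriv c) / PI * green_sum l.
Proof.
  intros [_ [Hq Hkq]] Hl.
  set (q := fun n => Cmod (coef_pos c n) ^ 2 + Cmod (coef_neg c n) ^ 2).
  assert (Eq : ex_series q) by exact (zsummable0_ex_series _ Hq).
  assert (Ekq : ex_series (fun n => freq n ^ 2 * q n)).
  { refine (ex_series_ext _ _ _ (zsummable0_ex_series _ Hkq)). intros n.
    unfold q, coef_pos, coef_neg. rewrite IZR_of_nat_S, IZR_opp_of_nat_S. simpl. ring. }
  set (p1 := fun n => fst (coef_pos c n)). set (p2 := fun n => snd (coef_pos c n)).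
  set (m1 := fun n => fst (coef_neg c n)). set (m2 := fun n => snd (coef_neg c n)).
  assert (Hq4 : forall n, q n = p1 n ^ 2 + m1 n ^ 2 + p2 n ^ 2 + m2 n ^ 2)
    by (intros n; unfold q; rewrite !Cmod_sq; unfold p1, p2, m1, m2; ring).
  assert (Hcomp : forall f : nat -> R, (forall n, f n ^ 2 <= q n) ->
            ex_series (fun n => f n ^ 2) /\ ex_series (fun n => freq n ^ 2 * f n ^ 2)).
  { intros f Hf. split.
    - apply (ex_series_Rabs_le _ q); [|exact Eq].
      intros n. rewrite Rabs_pos_eq by apply pow2_ge_0. apply Hf.
    - apply (ex_series_Rabs_le _ (fun n => freq n ^ 2 * q n)); [|exact Ekq].
      intros n. rewrite Rabs_pos_eq by (apply Rmult_le_pos; apply pow2_ge_0).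
      apply Rmult_le_compat_l; [apply pow2_ge_0 | apply Hf]. }
  assert (Hsq : forall a b d e : R, a ^ 2 <= a ^ 2 + b ^ 2 + d ^ 2 + e ^ 2 /\
                 b ^ 2 <= a ^ 2 + b ^ 2 + d ^ 2 + e ^ 2 /\ d ^ 2 <= a ^ 2 + b ^ 2 + d ^ 2 + e ^ 2 /\
                 e ^ 2 <= a ^ 2 + b ^ 2 + d ^ 2 + e ^ 2)
    by (intros a b d e; pose proof (pow2_ge_0 a); pose proof (pow2_ge_0 b);
        pose proof (pow2_ge_0 d); pose proof (pow2_ge_0 e); lra).
  destruct (Hcomp p1 ltac:(intros n; rewrite Hq4; apply Hsq)) as [Ep1 Ekp1].
  destruct (Hcomp m1 ltac:(intros n; rewrite Hq4; apply Hsq)) as [Em1 Ekm1].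
  destruct (Hcomp p2 ltac:(intros n; rewrite Hq4; apply Hsq)) as [Ep2 Ekp2].
  destruct (Hcomp m2 ltac:(intros n; rewrite Hq4; apply Hsq)) as [Em2 Ekm2].
  assert (Senergy : l * Series q + Series (fun n => freq n ^ 2 * q n)
          = green_energy l p1 + green_energy l m1 + green_energy l p2 + green_energy l m2).
  { rewrite (Series_ext _ _ Hq4).
    rewrite (Series_ext (fun n => freq n ^ 2 * q n)
               (fun n => freq n ^ 2 * p1 n ^ 2 + freq n ^ 2 * m1 n ^ 2
                                   + freq n ^ 2 * p2 n ^ 2 + freq n ^ 2 * m2 n ^ 2))
      by (intros n; rewrite Hq4; ring).
    rewrite !Series_plus4 by assumption. unfold green_energy. ring. }
  pose proof (green_cauchy_schwarz_pair l p1 m1 Hl Ep1 Ekp1 Em1 Ekm1).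
  pose proof (green_cauchy_schwarz_pair l p2 m2 Hl Ep2 Ekp2 Em2 Ekm2).
  rewrite fourier_eval_0, Cmod_sq, L2norm2_eq, L2norm2_deriv_eq.
  change (Series (fun n => p1 n + m1 n) ^ 2 + Series (fun n => p2 n + m2 n) ^ 2
          <= (l * (2 * PI * Series q) + 2 * PI * Series (fun n => freq n ^ 2 * q n)) / PI
             * green_sum l).
  replace ((l * (2 * PI * Series q) + 2 * PI * Series (fun n => freq n ^ 2 * q n)) / PI
           * green_sum l)
    with (2 * green_sum l * (l * Series q + Series (fun n => freq n ^ 2 * q n)))
    by (pose proof PI_RGT_0; field; lra).
  rewrite Senergy. lra.
Qed.

Definition even_coef (h : nat -> R) (k : Z) : C :=
  if Z.eq_dec k 0 then RtoC 0 else RtoC (h (Nat.pred (Z.to_nat (Z.abs k)))).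

Lemma coef_pos_even_coef h n : coef_pos (even_coef h) n = RtoC (h n).
Proof.
  unfold coef_pos, even_coef. destruct (Z.eq_dec _ 0) as [E|_]; [lia|].
  rewrite Z.abs_eq by lia. rewrite Nat2Z.id. reflexivity.
Qed.

Lemma coef_neg_even_coef h n : coef_neg (even_coef h) n = RtoC (h n).
Proof.
  unfold coef_neg, even_coef. destruct (Z.eq_dec _ 0) as [E|_]; [lia|].
  rewrite Z.abs_opp, Z.abs_eq by lia. rewrite Nat2Z.id. reflexivity.
Qed.

Lemma Cmod_RtoC_sq x : Cmod (RtoC x) ^ 2 = x ^ 2.
Proof. rewrite Cmod_sq. simpl. ring. Qed.

Section Even_coef.

Variable h : nat -> R.
Hypotheses (Eh2 : ex_series (fun n => h n ^ 2)) (Ekh2 : ex_series (fun n => freq n ^ 2 * h n ^ 2)).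

Lemma even_coef_H1per_mean0 : H1per_mean0 (even_coef h).
Proof.
  split; [|split]; unfold zsummable0.
  - reflexivity.
  - refine (ex_series_ext _ _ _ (ex_series_scal_l 2 _ Eh2)). intros n.
    change (even_coef h (Z.of_nat (S n))) with (coef_pos (even_coef h) n).
    change (even_coef h (- Z.of_nat (S n))%Z) with (coef_neg (even_coef h) n).
    rewrite coef_pos_even_coef, coef_neg_even_coef, Cmod_RtoC_sq, Rabs_pos_eq by apply pow2_ge_0.
    unfold scal; simpl; unfold mult; simpl. ring.
  - refine (ex_series_ext _ _ _ (ex_series_scal_l 2 _ Ekh2)). intros n.
    change (even_coef h (Z.of_nat (S n))) with (coef_pos (even_coef h) n).
    change (even_coef h (- Z.of_nat (S n))%Z) with (coef_neg (even_coef h) n).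
    rewrite coef_pos_even_coef, coef_neg_even_coef, Cmod_RtoC_sq, IZR_of_nat_S, IZR_opp_of_nat_S.
    rewrite Rabs_pos_eq by (apply Rmult_le_pos; apply pow2_ge_0).
    rewrite Rabs_pos_eq by (apply Rmult_le_pos; apply pow2_ge_0).
    unfold scal; simpl; unfold mult; simpl. ring.
Qed.

Lemma even_coef_L2norm2 : L2norm2 (even_coef h) = 4 * PI * Series (fun n => h n ^ 2).
Proof.
  rewrite L2norm2_eq, (Series_ext _ (fun n => 2 * h n ^ 2)), Series_scal_l; [ring|].
  intros n. rewrite coef_pos_even_coef, coef_neg_even_coef, Cmod_RtoC_sq. ring.
Qed.

Lemma even_coef_L2norm2_deriv :
  L2norm2_deriv (even_coef h) = 4 * PI * Series (fun n => freq n ^ 2 * h n ^ 2).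
Proof.
  rewrite L2norm2_deriv_eq, (Series_ext _ (fun n => 2 * (freq n ^ 2 * h n ^ 2))), Series_scal_l;
    [ring|].
  intros n. rewrite coef_pos_even_coef, coef_neg_even_coef, Cmod_RtoC_sq. ring.
Qed.

End Even_coef.

Lemma even_coef_value_0 h : Cmod (fourier_eval (even_coef h) 0) ^ 2 = 4 * Series h ^ 2.
Proof.
  rewrite fourier_eval_0, Cmod_sq. cbn [fst snd].
  rewrite (Series_ext _ (fun n => 2 * h n)), Series_scal_l
    by (intros n; rewrite coef_pos_even_coef, coef_neg_even_coef; simpl; ring).
  rewrite (Series_ext (fun n => snd (coef_pos (even_coef h) n) + snd (coef_neg (even_coef h) n))
             (fun _ => 0)), Series_zero
    by (intros n; rewrite coef_pos_even_coef, coef_neg_even_coef; simpl; ring).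
  ring.
Qed.

Definition normalizer (s : R) : R := / sqrt (4 * PI * s).

Lemma normalizer_sq s : 0 < s -> normalizer s ^ 2 = / (4 * PI * s).
Proof.
  intros Hs. pose proof PI_RGT_0. unfold normalizer.
  rewrite pow_inv, pow2_sqrt by nra. reflexivity.
Qed.

Lemma VV_Dgreen l : -1 < l -> VV (Dgreen l) = Finite (Vgreen l).
Proof.
  intros Hl. pose proof (green_sq_sum_pos l Hl) as G2. pose proof PI_RGT_0.
  set (mu := normalizer (green_sq_sum l)).
  assert (Hmu : mu ^ 2 = / (4 * PI * green_sq_sum l)) by exact (normalizer_sq _ G2).
  set (h := fun n => mu * green l n).
  assert (Eh2 : ex_series (fun n => h n ^ 2)).
  { apply (ex_series_ext (fun n => mu ^ 2 * green l n ^ 2)); [intros n; unfold h; simpl; ring|].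
    exact (ex_series_scal_l _ _ (ex_green_sq l Hl)). }
  assert (Ekh2 : ex_series (fun n => freq n ^ 2 * h n ^ 2)).
  { apply (ex_series_ext (fun n => mu ^ 2 * (freq n ^ 2 * green l n ^ 2)));
      [intros n; unfold h; simpl; ring|].
    exact (ex_series_scal_l _ _ (ex_green_ksq l Hl)). }
  unfold VV. apply Lub_Rbar_max.
  - exists (even_coef h). split; [exact (even_coef_H1per_mean0 h Eh2 Ekh2)|].
    rewrite even_coef_L2norm2, even_coef_L2norm2_deriv, even_coef_value_0.
    unfold h. rewrite (Series_ext _ (fun n => mu ^ 2 * green l n ^ 2)) by (intros; ring).
    rewrite (Series_ext (fun n => freq n ^ 2 * (mu * green l n) ^ 2)
               (fun n => mu ^ 2 * (freq n ^ 2 * green l n ^ 2))) by (intros; ring).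
    rewrite !Series_scal_l.
    replace ((mu * Series (green l)) ^ 2) with (mu ^ 2 * Series (green l) ^ 2) by ring.
    rewrite Hmu. fold (green_sum l) (green_sq_sum l) (green_ksq_sum l).
    unfold Dgreen, Vgreen. repeat split; field; lra.
  - intros v [c [Hc [H1 [HD ->]]]].
    eapply Rle_trans; [exact (fourier_eval_0_bound c l Hc Hl)|].
    rewrite H1, HD, Dgreen_eq by exact Hl. right. unfold Vgreen. field. lra.
Qed.

(* At [D = 1] the extremal is [cos x / sqrt PI]; the bound of [fourier_eval_0_bound] tends to
   [1 / PI] as [l -> -1]. *)
Lemma VV_1 : VV 1 = Finite (/ PI).
Proof.
  pose proof PI_RGT_0. pose proof zeta2_nonneg.
  set (h := fun n : nat => match n with 0%nat => normalizer 1 | S _ => 0 end).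
  assert (Hmu : normalizer 1 ^ 2 = / (4 * PI)).
  { rewrite normalizer_sq by lra. f_equal. ring. }
  destruct (Series_head h (fun n => eq_refl)) as [_ Sh].
  destruct (Series_head (fun n => h n ^ 2) (fun n => ltac:(simpl; ring))) as [Eh2 Sh2].
  destruct (Series_head (fun n => freq n ^ 2 * h n ^ 2) (fun n => ltac:(simpl; ring)))
    as [Ekh2 Skh2].
  unfold VV. apply Lub_Rbar_max.
  - exists (even_coef h). split; [exact (even_coef_H1per_mean0 h Eh2 Ekh2)|].
    rewrite even_coef_L2norm2, even_coef_L2norm2_deriv, even_coef_value_0, Sh, Sh2, Skh2.
    change (h 0%nat) with (normalizer 1). rewrite freq_0, Hmu. repeat split; field; lra.
  - intros v [c [Hc [H1 [HD ->]]]].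
    apply Rle_plus_epsilon. intros eps Heps.
    set (e := eps * PI / (zeta2 + 1)).
    assert (He : 0 < e) by (unfold e; apply Rdiv_lt_0_compat; nra).
    pose proof (fourier_eval_0_bound c (e - 1) Hc ltac:(lra)) as B.
    rewrite H1, HD in B. replace ((e - 1) * 1 + 1) with e in B by ring.
    destruct (green_sum_bounds (e - 1) ltac:(lra)) as [_ G1].
    replace (e - 1 + 1) with e in G1 by ring.
    eapply Rle_trans; [exact B|].
    apply Rle_trans with (e / PI * (/ e + zeta2)).
    { apply Rmult_le_compat_l; [apply Rdiv_le_0_compat; lra | exact G1]. }
    replace (e / PI * (/ e + zeta2)) with (/ PI + eps * (zeta2 / (zeta2 + 1)))
      by (unfold e; field; lra).
    assert (zeta2 / (zeta2 + 1) <= 1).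
    { apply Rmult_le_reg_r with (zeta2 + 1); [lra|].
      unfold Rdiv. rewrite Rmult_assoc, Rinv_l; lra. }
    nra.
Qed.

Lemma Vgreen_sub_inv_PI_le l : -1 < l -> l + 1 <= 1 ->
  Rabs (Vgreen l - / PI) <= (3 * zeta2 + zeta2 ^ 2) / PI * (l + 1).
Proof.
  intros Hl He. unfold Vgreen.
  pose proof (green_sum_bounds l Hl). pose proof (green_sq_sum_bounds l Hl).
  pose proof zeta2_nonneg. pose proof PI_RGT_0.
  set (e := l + 1) in *. assert (He0 : 0 < e) by (unfold e; lra).
  set (T1 := green_sum l - / e). set (T2 := green_sq_sum l - / e ^ 2).
  assert (HT1 : 0 <= T1 <= zeta2) by (unfold T1; lra).
  assert (HT2 : 0 <= T2 <= zeta2) by (unfold T2; lra).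
  replace (green_sum l) with ((1 + e * T1) / e) by (unfold T1; field; lra).
  replace (green_sq_sum l) with ((1 + e ^ 2 * T2) / e ^ 2) by (unfold T2; field; lra).
  assert (HD : 1 <= 1 + e ^ 2 * T2) by nra.
  replace (((1 + e * T1) / e) ^ 2 / (PI * ((1 + e ^ 2 * T2) / e ^ 2)) - / PI)
    with ((2 * e * T1 + e ^ 2 * T1 ^ 2 - e ^ 2 * T2) / (PI * (1 + e ^ 2 * T2))) by (field; lra).
  rewrite Rabs_div by nra. rewrite (Rabs_pos_eq (PI * _)) by nra.
  apply Rle_trans with (Rabs (2 * e * T1 + e ^ 2 * T1 ^ 2 - e ^ 2 * T2) / PI).
  { unfold Rdiv. apply Rmult_le_compat_l; [apply Rabs_pos | apply Rinv_le_contravar; nra]. }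
  replace ((3 * zeta2 + zeta2 ^ 2) / PI * e) with (e * (3 * zeta2 + zeta2 ^ 2) / PI)
    by (field; lra).
  unfold Rdiv. apply Rmult_le_compat_r; [left; apply Rinv_0_lt_compat; lra|].
  apply Rabs_le. split.
  - assert (e ^ 2 * T2 <= e * zeta2) by nra. assert (0 <= 2 * e * T1 + e ^ 2 * T1 ^ 2) by nra. nra.
  - assert (e * T1 <= e * zeta2) by nra.
    assert (e ^ 2 * T1 ^ 2 <= e * zeta2 ^ 2) by (assert (e * T1 ^ 2 <= zeta2 ^ 2) by nra; nra).
    assert (0 <= e ^ 2 * T2) by nra. nra.
Qed.

Lemma Vformula_at_minus_1 : filterlim Vformula (at_right (-1)) (locally (/ PI)).
Proof.
  apply (filterlim_ext_loc Vgreen).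
  { exists (mkposreal 1 Rlt_0_1). intros y _ Hy. symmetry. exact (Vformula_eq y Hy). }
  apply (filterlim_at_right_linear_bound _ _ _ ((3 * zeta2 + zeta2 ^ 2) / PI)).
  - pose proof zeta2_nonneg. pose proof PI_RGT_0.
    apply Rdiv_le_0_compat; nra.
  - intros y Hy. replace (y - -1) with (y + 1) by ring.
    apply Vgreen_sub_inv_PI_le; lra.
Qed.

Theorem lemma2p1 :
  (forall D : R, 1 < D -> exists! l : R, -1 < l /\ Dfun l = D) /\
  (forall D l : R, 1 < D -> -1 < l -> Dfun l = D -> VV D = Finite (Vformula l)) /\
  (exists L : R, VV 1 = Finite L /\ filterlim Vformula (at_right (-1)) (locally L)) /\
  (forall lam : R -> R,
     (forall D : R, 1 < D -> -1 < lam D /\ Dfun (lam D) = D) ->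
     filterlim lam (at_right 1) (locally (-1)) /\
     filterlim lam (Rbar_locally p_infty) (Rbar_locally p_infty)).
Proof.
  split; [|split; [|split]].
  - intros D HD. destruct (Dgreen_surjective D HD) as [l [Hl HlD]].
    exists l. split; [split; [exact Hl | rewrite Dfun_eq; assumption]|].
    intros l' [Hl' Hl'D]. rewrite Dfun_eq in Hl'D by exact Hl'.
    destruct (Rtotal_order l l') as [h|[h|h]]; [|exact h|];
      [pose proof (Dgreen_increasing l l' Hl h) | pose proof (Dgreen_increasing l' l Hl' h)]; lra.
  - intros D l _ Hl HlD. rewrite Dfun_eq in HlD by exact Hl. subst D.
    rewrite Vformula_eq by exact Hl. exact (VV_Dgreen l Hl).
  - exists (/ PI). split; [exact VV_1 | exact Vformula_at_minus_1].
  - intros lam Hlam.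
    assert (Hlam' : forall D, 1 < D -> -1 < lam D /\ Dgreen (lam D) = D).
    { intros D HD. destruct (Hlam D HD) as [Hl HlD]. rewrite Dfun_eq in HlD; auto. }
    split; [exact (Dgreen_inverse_at_1 lam Hlam') | exact (Dgreen_inverse_at_infty lam Hlam')].
Qed.
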